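(* For $n\ge 6$ let $e(n)$ (resp. $o(n)$) be the number of partitions of $n$ with parts $p_1\ge p_2\ge\dots\ge p_k$ such that (a) $k\ge 3$; (b) the three largest parts are equal, $p_1=p_2=p_3$, this common value is at least $3$, and it is even (resp. odd); (c) the remaining parts $p_4,\dots,p_k$, if present, are distinct; (d) the fourth largest part, if present, satisfies $p_4\le p_3-2$; (e) the smallest part is not $1$. For an integer $t$ put $P_1(t)=\tfrac12(3t^2+t+4)$, $P_2(t)=\tfrac12(3(t+1)^2-t-1)$, $P_3(t)=\tfrac12(3(t+1)^2-t+3)$, $P_4(t)=\tfrac12(3(t+1)^2+t+1)$. Then for every integer $n\ge 6$: (a) $e(n)=o(n)$ if $n\notin\{P_1(t),P_2(t),P_3(t),P_4(t)\}$ for every integer $t\ge 2$; (b) $e(n)=o(n)-1$ if $n=P_1(t)$ or $n=P_4(t)$ for some integer $t\ge 2$; (c) $e(n)=o(n)+1$ if $n=P_2(t)$ or $n=P_3(t)$ for some integer $t\ge 2$. *)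

From mathcomp Require Import all_boot.
Set Implicit Arguments. Unset Strict Implicit. Unset Printing Implicit Defensive.

Definition is_partition (n : nat) (s : seq nat) : bool :=
  [&& sorted geq s, all (fun x => 0 < x) s & sumn s == n].

Definition good_part (b : bool) (s : seq nat) : bool :=
  [&& 3 <= size s,
      nth 0 s 0 == nth 0 s 1, nth 0 s 1 == nth 0 s 2,
      3 <= nth 0 s 0, odd (nth 0 s 0) == b,
      uniq (drop 3 s),
      (4 <= size s) ==> (nth 0 s 3 + 2 <= nth 0 s 2)
    & last 0 s != 1].

(* Every partition of n has at most n parts, each at most n; we encode a
   partition as its nonincreasing list of parts padded with zeros to length n.
   This is a bijection between nonincreasing n-tuples over 'I_(n+1) and
   partitions of n (after dropping the zeros). *)
Definition parts_of (n : nat) (t : n.-tuple 'I_n.+1) : seq nat :=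
  [seq x <- map val t | 0 < x].

Definition count_parts (b : bool) (n : nat) : nat :=
  #|[set t : n.-tuple 'I_n.+1 |
      sorted geq (map val t) && is_partition n (parts_of t)
      && good_part b (parts_of t)]|.

Definition e_count (n : nat) : nat := count_parts false n.
Definition o_count (n : nat) : nat := count_parts true n.

(* The four quadratic polynomials (all numerators are even, so %/ 2 is exact). *)
Definition P1 (t : nat) : nat := (3 * t ^ 2 + t + 4) %/ 2.
Definition P2 (t : nat) : nat := (3 * (t + 1) ^ 2 - t - 1) %/ 2.
Definition P3 (t : nat) : nat := (3 * (t + 1) ^ 2 - t + 3) %/ 2.
Definition P4 (t : nat) : nat := (3 * (t + 1) ^ 2 + t + 1) %/ 2.

From mathcomp Require Import all_boot zify.
Set Implicit Arguments. Unset Strict Implicit. Unset Printing Implicit Defensive.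

(* Write a partition counted by e(n) or o(n) as [a; a; a & d] and tilt it to
   [a+1; a; a-1 & d]: this is a bijection onto the partitions of n into
   distinct parts >= 2 whose three largest parts are consecutive, and the
   parity of a is that of the second part.  On these partitions Franklin's
   involution from the proof of the pentagonal number theorem (move the
   smallest part onto the slope of consecutive largest parts, or the slope
   onto a new smallest part), applied after setting aside a smallest part 2,
   changes the largest part by one and hence flips the parity.  Its fixed
   points are the staircases [2k+e-1; ...; k+e], possibly followed by a part 2;
   there is at most one of each parity, and their sizes are P1(t), ..., P4(t). *)

Fixpoint slope (l : seq nat) : nat :=
  if l is x :: l' then
    if l' is y :: _ then (if x == y.+1 then (slope l').+1 else 1) else 1
  else 0.

Lemma slopeP l i : i <= slope l <->
  i <= size l /\ (forall j, j.+1 < i -> nth 0 l j = (nth 0 l j.+1).+1).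
Proof.
elim: l i => [|x l IH] i /=.
  by split; [move=> h; split=> // j hj; lia | case].
case: l IH => [|y l] IH.
  by split; [move=> h; split=> // j hj; lia | case].
case: eqP => [exy|nxy].
  case: i => [|i]; first by split=> // _; split=> // j; lia.
  rewrite ltnS (IH i) /=; split.
    by case=> h1 h2; split=> // -[|j] hj //=; exact: h2.
  by case=> h1 h2; split=> // j hj; exact: (h2 j.+1).
split; first by move=> hi; split=> [|j hj]; lia.
case=> h1 h2; case: i h1 h2 => [|[|i]] // h1 h2.
by have := h2 0 isT => /= /nxy.
Qed.

Lemma slope_le_size l : slope l <= size l.
Proof. by have [] := (slopeP l (slope l)).1 (leqnn _). Qed.

Lemma slope_nth l j : j.+1 < slope l -> nth 0 l j = (nth 0 l j.+1).+1.
Proof. by move=> h; have [_ ] := (slopeP l (slope l)).1 (leqnn _); apply. Qed.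

Lemma slope_maximal l : 0 < slope l -> slope l < size l ->
  nth 0 l (slope l).-1 != (nth 0 l (slope l)).+1.
Proof.
move=> h0 hk; apply/eqP=> e.
have : (slope l).+1 <= slope l; last by rewrite ltnn.
apply/slopeP; split=> // j hj.
case: (ltngtP j.+1 (slope l)) => hj'; [exact: slope_nth | lia |].
have -> : j = (slope l).-1 by lia.
by rewrite prednK.
Qed.

Definition sdesc (l : seq nat) : Prop :=
  forall i, i.+1 < size l -> nth 0 l i.+1 < nth 0 l i.

Lemma sdesc_nth_gap l i j : sdesc l -> i <= j -> j < size l ->
  nth 0 l j + (j - i) <= nth 0 l i.
Proof.
move=> hd; elim: j => [|j IH] hij hj.
  have -> : i = 0 by lia.
  lia.
case: (ltngtP i j.+1) => h; last by rewrite h subnn addn0.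
  by have := hd j hj; have := IH (ltnSE h) (ltnW hj); lia.
lia.
Qed.

Fixpoint consec (c k : nat) : seq nat :=
  if k is k'.+1 then (c + k') :: consec c k' else [::].

Lemma size_consec c k : size (consec c k) = k.
Proof. by elim: k => //= k ->. Qed.

Lemma nth_consec c k i : i < k -> nth 0 (consec c k) i = c + k.-1 - i.
Proof. by elim: k i => // k IH [|i] hi /=; [lia | rewrite IH //; lia]. Qed.

Lemma sumn_consec c k : sumn (consec c k) * 2 + k = k * (2 * c + k).
Proof. by elim: k => //= k IH; nia. Qed.

Lemma last_consec c k : 0 < k -> last 0 (consec c k) = c.
Proof. by move=> hk; rewrite -nth_last size_consec nth_consec; lia. Qed.

Lemma slope_consec c k : slope (consec c k) = k.
Proof.
apply/eqP; rewrite eqn_leq; apply/andP; split.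
  by have := slope_le_size (consec c k); rewrite size_consec.
apply/slopeP; rewrite size_consec; split=> // j hj.
by rewrite !nth_consec //; lia.
Qed.

Lemma sdesc_consec c k : sdesc (consec c k).
Proof. by move=> i; rewrite size_consec => hi; rewrite !nth_consec //; lia. Qed.

Lemma slope_sizeE l : slope l = size l -> l = consec (last 0 l) (size l).
Proof.
move=> hr; case: (posnP (size l)) => hk; first by move/size0nil: hk => ->.
apply: (@eq_from_nth _ 0); rewrite ?size_consec // => i hi.
rewrite nth_consec // -nth_last.
have gap d : d < size l -> nth 0 l ((size l).-1 - d) = nth 0 l (size l).-1 + d.
  elim: d => [|d IH] hd; first by rewrite subn0 addn0.
  rewrite slope_nth; last by rewrite hr; lia.
  have -> : ((size l).-1 - d.+1).+1 = (size l).-1 - d by lia.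
  by rewrite IH; lia.
have := gap ((size l).-1 - i) ltac:(lia).
have -> : (size l).-1 - ((size l).-1 - i) = i by lia.
lia.
Qed.

Definition franklin_dom (l : seq nat) : Prop :=
  [/\ sdesc l, forall i, i < size l -> 3 <= nth 0 l i & 3 <= slope l].

Definition droplast (l : seq nat) : seq nat := take (size l).-1 l.

Lemma rcons_droplast l : l != [::] -> rcons (droplast l) (last 0 l) = l.
Proof.
case/lastP: l => // b x _.
by rewrite /droplast size_rcons last_rcons -!cats1 take_size_cat.
Qed.

Lemma franklin_dom_base l : franklin_dom l ->
  [/\ 3 <= size l, 3 <= last 0 l, last 0 l = nth 0 l (size l).-1 &
      forall i, i < size l -> last 0 l <= nth 0 l i].
Proof.
case=> hd ha hr.
have hs : 3 <= size l by have := slope_le_size l; lia.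
have hl : last 0 l = nth 0 l (size l).-1 by rewrite nth_last.
split=> //; first by rewrite hl; apply: ha; lia.
by move=> i hi; rewrite hl; have := @sdesc_nth_gap l i (size l).-1 hd; lia.
Qed.

Definition shift_base (l : seq nat) : seq nat :=
  let s := last 0 l in map S (take s l) ++ drop s (droplast l).

Definition shift_slope (l : seq nat) : seq nat :=
  let r := slope l in map predn (take r l) ++ drop r l ++ [:: r].

Definition franklin (l : seq nat) : seq nat :=
  let k := size l in let s := last 0 l in let r := slope l in
  if (s <= r) && (s < k) then shift_base l
  else if (r < s) && ~~ ((r == k) && (s == r.+1)) then shift_slope l else l.

Lemma size_shift_base l : last 0 l < size l -> size (shift_base l) = (size l).-1.
Proof.
move=> h; rewrite /shift_base size_cat size_map size_drop !size_take h.
by case: ifP => h2; lia.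
Qed.

Lemma nth_shift_base l i : last 0 l < size l -> i < (size l).-1 ->
  nth 0 (shift_base l) i = if i < last 0 l then (nth 0 l i).+1 else nth 0 l i.
Proof.
move=> h hi; rewrite /shift_base nth_cat size_map size_take h.
case: ifP => hs; first by rewrite (nth_map 0) ?size_take ?h // nth_take.
by rewrite nth_drop nth_take; [congr nth; lia | lia].
Qed.

Lemma size_shift_slope l : size (shift_slope l) = (size l).+1.
Proof.
rewrite /shift_slope size_cat size_map size_cat size_drop size_take /=.
by have := slope_le_size l; case: ifP => h1 h2; lia.
Qed.

Lemma nth_shift_slope l i : i <= size l ->
  nth 0 (shift_slope l) i = if i < slope l then (nth 0 l i).-1
                            else if i < size l then nth 0 l i else slope l.
Proof.
move=> hi; have hr := slope_le_size l.
rewrite /shift_slope nth_cat size_map size_take.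
have -> : (if slope l < size l then slope l else size l) = slope l by case: ifP; lia.
case: ifP => h1.
  by rewrite (nth_map 0) ?size_take ?nth_take //; case: ifP; lia.
rewrite nth_cat size_drop; case: ifP => h2.
  by rewrite nth_drop; case: ifP => h3; [congr nth; lia | lia].
case: ifP => h3; first lia.
by have -> : i - slope l - (size l - slope l) = 0 by lia.
Qed.

Lemma sumn_map_succ s : sumn (map S s) = sumn s + size s.
Proof. by elim: s => //= x s ->; lia. Qed.

Lemma sumn_map_predn s : (forall i, i < size s -> 0 < nth 0 s i) ->
  sumn (map predn s) + size s = sumn s.
Proof.
elim: s => //= x s IH h.
by have := h 0 isT; have := IH (fun i hi => h i.+1 hi); rewrite /=; lia.
Qed.

Lemma map_succ_predn s : (forall i, i < size s -> 0 < nth 0 s i) ->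
  map S (map predn s) = s.
Proof.
elim: s => //= x s IH h.
by rewrite IH ?(prednK (h 0 isT)) // => i hi; exact: (h i.+1).
Qed.

Section ShiftBase.
Variable l : seq nat.
Hypotheses (hD : franklin_dom l) (base_le_slope : last 0 l <= slope l)
  (base_lt_size : last 0 l < size l).

Lemma sdesc_shift_base : sdesc (shift_base l).
Proof.
have [hd _ _] := hD.
move=> i; rewrite size_shift_base // => hi; rewrite !nth_shift_base //; try lia.
by have := hd i ltac:(lia); case: ifP => h1; case: ifP => h2; lia.
Qed.

Lemma slope_shift_base : slope (shift_base l) = last 0 l.
Proof.
have [hd _ _] := hD; have [hs hs3 _ _] := franklin_dom_base hD.
have nth' := nth_shift_base base_lt_size.
have sz' := size_shift_base base_lt_size.
apply/eqP; rewrite eqn_leq; apply/andP; split.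
  rewrite leqNgt; apply/negP => /slopeP [h1 h2].
  have := h2 (last 0 l).-1 ltac:(lia); rewrite prednK; last lia.
  rewrite !nth' -?sz'; try lia.
  rewrite prednK; last lia; rewrite ltnn.
  have := hd (last 0 l).-1; rewrite prednK; last lia.
  by case: ifP => h3 h4; lia.
apply/slopeP; split; first lia.
move=> j hj; rewrite !nth'; try lia.
by rewrite hj ltnW //; congr S; apply: slope_nth; lia.
Qed.

Lemma franklin_dom_shift_base : franklin_dom (shift_base l).
Proof.
have [_ ha _] := hD; have [_ hs3 _ _] := franklin_dom_base hD.
split; [exact: sdesc_shift_base | | by rewrite slope_shift_base].
move=> i; rewrite size_shift_base // => hi; rewrite nth_shift_base //.
by have := ha i ltac:(lia); case: ifP; lia.
Qed.

Lemma sumn_shift_base : sumn (shift_base l) = sumn l.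
Proof.
have [hs _ _ _] := franklin_dom_base hD.
have hl0 : l != [::] by apply/eqP=> e; rewrite e in hs.
rewrite /shift_base sumn_cat sumn_map_succ size_takel; last lia.
rewrite -[in RHS](rcons_droplast hl0) sumn_rcons.
have -> : take (last 0 l) l = take (last 0 l) (droplast l).
  by rewrite /droplast take_takel //; lia.
by have := congr1 sumn (cat_take_drop (last 0 l) (droplast l)); rewrite sumn_cat; lia.
Qed.

Lemma head_shift_base : nth 0 (shift_base l) 0 = (nth 0 l 0).+1.
Proof.
have [_ hs3 _ _] := franklin_dom_base hD.
by rewrite nth_shift_base //; [case: ifP; lia | lia].
Qed.

Lemma franklin_shift_base : franklin (shift_base l) = l.
Proof.
have [hd _ _] := hD; have [hs hs3 hlast _] := franklin_dom_base hD.
have hl0 : l != [::] by apply/eqP=> e; rewrite e in hs.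
have sz' := size_shift_base base_lt_size.
have hA2 := base_lt_size.
set s := last 0 l in hA2 hs3 hlast sz' *.
have [h1 h2] : s < last 0 (shift_base l) /\
    ~~ ((s == (size l).-1) && (last 0 (shift_base l) == s.+1)).
  rewrite -nth_last sz' nth_shift_base //; last lia.
  have := hd (size l).-2 ltac:(lia).
  have -> : (size l).-2.+1 = (size l).-1 by lia.
  by rewrite -hlast; case: ifP => h1; lia.
rewrite {1}/franklin sz' slope_shift_base -/s.
rewrite (_ : (last 0 (shift_base l) <= s) = false); last lia.
rewrite h1 h2 /= /shift_slope slope_shift_base -/s.
have szs : size (map S (take s l)) = s by rewrite size_map size_takel //; lia.
rewrite /shift_base -/s take_size_cat // drop_size_cat // (mapK succnK).
have -> : take s l = take s (droplast l) by rewrite /droplast take_takel //; lia.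
by rewrite catA cat_take_drop cats1 rcons_droplast.
Qed.

End ShiftBase.

Lemma last_shift_slope l : last 0 (shift_slope l) = slope l.
Proof. by rewrite /shift_slope catA cats1 last_rcons. Qed.

Section ShiftSlope.
Variable l : seq nat.
Hypotheses (hD : franklin_dom l) (slope_lt_base : slope l < last 0 l)
  (not_fixed : ~~ ((slope l == size l) && (last 0 l == (slope l).+1))).

Lemma sdesc_shift_slope : sdesc (shift_slope l).
Proof.
have [hd ha hr] := hD; have [hs hs3 hlast hge] := franklin_dom_base hD.
have hrk := slope_le_size l.
move=> i; rewrite size_shift_slope => hi; rewrite !nth_shift_slope //; try lia.
case: (ltngtP i.+1 (slope l)) => h1.
- by have := slope_nth h1; have := ha i.+1 ltac:(lia); lia.
- case: ifP => h2; first by rewrite ifT; [have := hd i h2; lia | lia].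
  rewrite ifT; last lia.
  have -> : i = (size l).-1 by lia.
  by rewrite -hlast; lia.
- case: ifP => h2.
    have := @slope_maximal l ltac:(lia) ltac:(lia).
    by rewrite -h1 /=; have := hd i ltac:(lia); lia.
  have ei : i = (size l).-1 by lia.
  by move: not_fixed; rewrite -h1 (_ : i.+1 == size l) ?ei -?hlast /=; lia.
Qed.

Lemma slope_shift_slope : slope l <= slope (shift_slope l).
Proof.
have [_ ha _] := hD; have hrk := slope_le_size l.
apply/slopeP; split; first by rewrite size_shift_slope; lia.
move=> j hj; rewrite !nth_shift_slope //; try lia.
by rewrite hj ltnW //; have := slope_nth hj; have := ha j.+1 ltac:(lia); lia.
Qed.

Lemma franklin_dom_shift_slope : franklin_dom (shift_slope l).
Proof.
have [_ ha hr] := hD; have [_ _ _ hge] := franklin_dom_base hD.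
have hrk := slope_le_size l.
split; [exact: sdesc_shift_slope | | by have := slope_shift_slope; lia].
move=> i; rewrite size_shift_slope => hi; rewrite nth_shift_slope //; try lia.
case: ifP => h1; first by have := hge i ltac:(lia); lia.
by case: ifP => h2; [exact: ha | lia].
Qed.

Lemma sumn_shift_slope : sumn (shift_slope l) = sumn l.
Proof.
have [_ ha _] := hD; have hrk := slope_le_size l.
have hpos i : i < size (take (slope l) l) -> 0 < nth 0 (take (slope l) l) i.
  by rewrite size_takel // => hi; rewrite nth_take //; have := ha i ltac:(lia); lia.
rewrite /shift_slope !sumn_cat /=.
have := sumn_map_predn hpos; rewrite size_takel //.
by have := congr1 sumn (cat_take_drop (slope l) l); rewrite sumn_cat; lia.
Qed.

Lemma head_shift_slope : nth 0 (shift_slope l) 0 = (nth 0 l 0).-1.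
Proof.
have [_ _ hr] := hD.
by rewrite nth_shift_slope; [rewrite ifT //; lia | lia].
Qed.

Lemma franklin_shift_slope : franklin (shift_slope l) = l.
Proof.
have [_ ha _] := hD; have hrk := slope_le_size l.
set r := slope l in hrk *.
rewrite {1}/franklin size_shift_slope last_shift_slope.
have -> : (r <= slope (shift_slope l)) && (r < (size l).+1).
  by apply/andP; split; [exact: slope_shift_slope | lia].
have szs : size (map predn (take r l)) = r by rewrite size_map size_takel.
rewrite /shift_base last_shift_slope /droplast size_shift_slope /=.
rewrite /shift_slope -/r take_size_cat // catA take_size_cat; last first.
  by rewrite size_cat szs size_drop; lia.
rewrite drop_size_cat // map_succ_predn ?cat_take_drop // => i.
by rewrite size_takel // => hi; rewrite nth_take //; have := ha i ltac:(lia); lia.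
Qed.

End ShiftSlope.

Lemma franklin_involution l : franklin_dom l ->
  [/\ franklin_dom (franklin l), sumn (franklin l) = sumn l,
      franklin (franklin l) = l &
      franklin l = l \/ odd (nth 0 (franklin l) 0) = ~~ odd (nth 0 l 0)].
Proof.
move=> hD; have [hd ha hr] := hD.
have h03 : 3 <= nth 0 l 0 by apply: ha; have := slope_le_size l; lia.
case: (boolP ((last 0 l <= slope l) && (last 0 l < size l))) => hA.
  have -> : franklin l = shift_base l by rewrite /franklin hA.
  case/andP: hA => hA1 hA2.
  rewrite sumn_shift_base // head_shift_base // franklin_shift_base //.
  by split; [exact: franklin_dom_shift_base | | | right; rewrite oddS].
case: (boolP ((slope l < last 0 l) &&
              ~~ ((slope l == size l) && (last 0 l == (slope l).+1)))) => hB.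
  have -> : franklin l = shift_slope l by rewrite /franklin (negbTE hA) hB.
  case/andP: hB => hB1 hB2.
  rewrite sumn_shift_slope // head_shift_slope // franklin_shift_slope //.
  split; [exact: franklin_dom_shift_slope | | | right] => //.
  by case: (nth 0 l 0) h03 => // x _; rewrite /= negbK.
have fixl : franklin l = l by rewrite /franklin (negbTE hA) (negbTE hB).
by rewrite !fixl; split=> //; left.
Qed.

Lemma franklin_fixed l : franklin_dom l -> franklin l = l ->
  exists2 k, 3 <= k & exists e : bool, l = consec (k + e) k.
Proof.
move=> hD; have hr := slope_le_size l; have [hs _ _ _] := franklin_dom_base hD.
rewrite /franklin; case: ifP => hA.
  move=> e; have := congr1 size e; rewrite size_shift_base; first lia.
  by case/andP: hA.
case: ifP => hB; first by move=> e; have := congr1 size e; rewrite size_shift_slope; lia.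
move=> _; move/negbT: hA; move/negbT: hB => hB hA.
have hk : slope l = size l by lia.
exists (size l) => //; rewrite {1}(slope_sizeE hk).
have [->|->] : last 0 l = size l \/ last 0 l = (size l).+1 by lia.
  by exists false; rewrite addn0.
by exists true; rewrite addn1.
Qed.

Lemma franklin_dom_consec c k : 3 <= k -> 3 <= c -> franklin_dom (consec c k).
Proof.
move=> hk hc; split; [exact: sdesc_consec | | by rewrite slope_consec].
by move=> i; rewrite size_consec => hi; rewrite nth_consec //; lia.
Qed.

Lemma franklin_consec k (e : bool) : 0 < k ->
  franklin (consec (k + e) k) = consec (k + e) k.
Proof.
move=> hk; rewrite /franklin last_consec // slope_consec size_consec.
by case: e; rewrite /= ?addn0 ?addn1 ?ltnn ?ltnSn ?eqxx ?andbF //= ltnNge leqnSn.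
Qed.

Definition tilted (n : nat) (l : seq nat) : Prop :=
  [/\ sdesc l, forall i, i < size l -> 2 <= nth 0 l i, 3 <= slope l & sumn l = n].

(* A part 2 can only be the smallest part; it is set aside and Franklin's map
   acts on the other parts, except for [4; 3; 2], whose other parts have slope 2. *)
Definition franklin2 (l : seq nat) : seq nat :=
  if last 0 l == 2 then
    if l == [:: 4; 3; 2] then l else rcons (franklin (droplast l)) 2
  else franklin l.

Lemma droplast_rcons s x : droplast (rcons s x) = s.
Proof. by rewrite /droplast size_rcons -cats1 take_size_cat. Qed.

Lemma tilted_nth01 n l : tilted n l -> nth 0 l 0 = (nth 0 l 1).+1.
Proof. by case=> _ _ hr _; apply: slope_nth; lia. Qed.

Lemma tilted_franklin_dom n l : tilted n l -> last 0 l != 2 -> franklin_dom l.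
Proof.
case=> hd ha hr _ hl; split=> // i hi.
have hs := slope_le_size l.
have hl2 : 2 <= last 0 l by rewrite -nth_last; apply: ha; lia.
case: (ltngtP i (size l).-1) => h; last by rewrite h nth_last; lia.
  by have := @sdesc_nth_gap l i (size l).-1 hd; rewrite nth_last; lia.
lia.
Qed.

Lemma franklin_dom_tilted l : franklin_dom l -> tilted (sumn l) l.
Proof. by case=> hd ha hr; split=> // i hi; have := ha i hi; lia. Qed.

Lemma tilted_droplast n l : tilted n l -> last 0 l = 2 -> l != [:: 4; 3; 2] ->
  franklin_dom (droplast l) /\ l = rcons (droplast l) 2.
Proof.
move=> [hd ha hr hn] hl hne.
have hs := slope_le_size l.
have hl' : l = rcons (droplast l) 2.
  by rewrite -hl rcons_droplast //; apply/eqP=> e; rewrite e in hr.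
have hs4 : 4 <= size l.
  case: (ltngtP (size l) 3) => h; [lia | lia |].
  have /slope_sizeE : slope l = size l by lia.
  by rewrite h hl => e; rewrite e in hne.
have szb : size (droplast l) = (size l).-1 by rewrite /droplast size_takel //; lia.
have nb i : i < (size l).-1 -> nth 0 (droplast l) i = nth 0 l i.
  by move=> hi; rewrite /droplast nth_take.
split=> //; split.
- by move=> i; rewrite szb => hi; rewrite !nb; try lia; apply: hd; lia.
- move=> i; rewrite szb => hi; rewrite nb //.
  by have := @sdesc_nth_gap l i (size l).-1 hd; rewrite nth_last hl; lia.
- apply/slopeP; rewrite szb; split; first lia.
  by move=> j hj; rewrite !nb; try lia; apply: slope_nth; lia.
Qed.

Lemma franklin_dom_rcons2 l : franklin_dom l -> tilted (sumn l + 2) (rcons l 2).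
Proof.
move=> hD; have [hs hl3 hl hge] := franklin_dom_base hD; case: hD => hd ha hr.
split; last by rewrite sumn_rcons.
- move=> i; rewrite size_rcons => hi; rewrite !nth_rcons.
  case: (ltngtP i.+1 (size l)) => h; [exact: hd | lia |].
  by apply: ha; lia.
- move=> i; rewrite size_rcons => hi; rewrite nth_rcons.
  case: ifP => h; first by have := ha i h; lia.
  by rewrite (_ : i == size l); last lia.
- apply/slopeP; rewrite size_rcons; split; first by have := slope_le_size l; lia.
  by move=> j hj; rewrite !nth_rcons !ifT; try lia; apply: slope_nth; lia.
Qed.

Lemma franklin2_rcons2 l : franklin_dom l -> franklin2 (rcons l 2) = rcons (franklin l) 2.
Proof.
move=> hD; have [hs _ _ _] := franklin_dom_base hD.
rewrite /franklin2 last_rcons eqxx droplast_rcons ifN //.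
by apply/eqP=> /(congr1 size); rewrite size_rcons /=; lia.
Qed.

Lemma franklin2_dom l : franklin_dom l -> franklin2 l = franklin l.
Proof.
move=> hD; have [_ hl _ _] := franklin_dom_base hD.
by rewrite /franklin2 ifN //; apply/eqP=> e; rewrite e in hl.
Qed.

Lemma franklin2_involution n l : tilted n l ->
  [/\ tilted n (franklin2 l), franklin2 (franklin2 l) = l &
      franklin2 l = l \/ odd (nth 0 (franklin2 l) 1) = ~~ odd (nth 0 l 1)].
Proof.
move=> hL.
have flip l' : tilted n l' -> odd (nth 0 l' 0) = ~~ odd (nth 0 l 0) ->
    odd (nth 0 l' 1) = ~~ odd (nth 0 l 1).
  by move=> hL'; rewrite (tilted_nth01 hL) (tilted_nth01 hL') /= => /negb_inj.
case: (boolP (last 0 l == 2)) => hl; last first.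
  have hD := tilted_franklin_dom hL hl.
  have [hD' hsum hFF hpar] := franklin_involution hD.
  have hL' : tilted n (franklin l).
    by case: hL => _ _ _ <-; rewrite -hsum; exact: franklin_dom_tilted.
  rewrite !franklin2_dom //; split=> //.
  by case: hpar => [|/(flip _ hL')]; [left | right].
case: (boolP (l == [:: 4; 3; 2])) => h432.
  have fixl : franklin2 l = l by rewrite /franklin2 hl h432.
  by rewrite !fixl; split=> //; left.
have [hD hl'] := tilted_droplast hL (eqP hl) h432.
set m := droplast l in hD hl' *.
have [hD' hsum hFF hpar] := franklin_involution hD.
have [hs _ _ _] := franklin_dom_base hD.
have [hs' _ _ _] := franklin_dom_base hD'.
have E : franklin2 l = rcons (franklin m) 2 by rewrite hl' franklin2_rcons2.
have hL' : tilted n (franklin2 l).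
  have -> : n = sumn m + 2 by case: hL => _ _ _ <-; rewrite hl' sumn_rcons.
  by rewrite E -hsum; exact: franklin_dom_rcons2.
split=> //; first by rewrite E franklin2_rcons2 // hFF.
case: hpar => [e|hpar]; first by left; rewrite E e.
right; apply: flip => //.
by rewrite E hl' !nth_rcons ifT ?ifT //; lia.
Qed.

Definition franklin2_fixpoint (k : nat) (e p : bool) : seq nat :=
  if p then rcons (consec (k + e) k) 2 else consec (k + e) k.

Lemma franklin2_fixedE n l : tilted n l -> franklin2 l = l ->
  exists k (e p : bool), 3 <= k + (e && p) /\ l = franklin2_fixpoint k e p.
Proof.
move=> hL; case: (boolP (last 0 l == 2)) => hl; last first.
  rewrite franklin2_dom; last exact: tilted_franklin_dom hL hl.
  move=> /(franklin_fixed (tilted_franklin_dom hL hl)) [k hk [e ->]].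
  by exists k, e, false; rewrite andbF addn0.
case: (boolP (l == [:: 4; 3; 2])) => [/eqP -> _|h432].
  by exists 2, true, true.
have [hD hl'] := tilted_droplast hL (eqP hl) h432.
set m := droplast l in hD hl' *.
rewrite hl' franklin2_rcons2 // => /rcons_inj [] /(franklin_fixed hD) [k hk [e ->]].
by exists k, e, true; split=> //; lia.
Qed.

Lemma franklin2_fixpoint_fixed k e p : 3 <= k + (e && p) ->
  let l := franklin2_fixpoint k e p in tilted (sumn l) l /\ franklin2 l = l.
Proof.
move=> hk /=; rewrite /franklin2_fixpoint.
case: (boolP (e && p)) hk => [/andP[-> ->] hk | hep hk]; rewrite ?addn0 in hk.
  case: (ltngtP k 2) => h2; first lia; last first.
    by rewrite h2; split=> //; split=> // -[|[|[|i]]].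
  have hD : franklin_dom (consec (k + true) k) by apply: franklin_dom_consec; lia.
  split; first by rewrite sumn_rcons; exact: franklin_dom_rcons2.
  by rewrite franklin2_rcons2 // franklin_consec //; lia.
have hD : franklin_dom (consec (k + e) k) by apply: franklin_dom_consec; lia.
case: p hep => _.
  split; first by rewrite sumn_rcons; exact: franklin_dom_rcons2.
  by rewrite franklin2_rcons2 // franklin_consec //; lia.
split; first exact: franklin_dom_tilted.
by rewrite franklin2_dom // franklin_consec //; lia.
Qed.

Lemma odd_franklin2_fixpoint k e p : 2 <= k ->
  odd (nth 0 (franklin2_fixpoint k e p) 1) = e.
Proof.
move=> hk; have -> : nth 0 (franklin2_fixpoint k e p) 1 = (k.-1).*2 + e.
  rewrite /franklin2_fixpoint; case: p; rewrite ?nth_rcons ?size_consec ?ifT;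
    by rewrite ?nth_consec //; lia.
by rewrite oddD odd_double oddb.
Qed.

Lemma sumn_franklin2_fixpoint k e p :
  sumn (franklin2_fixpoint k e p) * 2 + k = k * (3 * k + 2 * e) + 4 * p.
Proof.
have := sumn_consec (k + e) k; rewrite /franklin2_fixpoint.
by case: p; rewrite ?sumn_rcons; nia.
Qed.

Lemma franklin2_fixpoint_inj k j e p q :
  3 <= k + (e && p) -> 3 <= j + (e && q) ->
  sumn (franklin2_fixpoint k e p) = sumn (franklin2_fixpoint j e q) ->
  franklin2_fixpoint k e p = franklin2_fixpoint j e q.
Proof.
move=> hk hj hs.
have := sumn_franklin2_fixpoint k e p; have := sumn_franklin2_fixpoint j e q.
rewrite hs => hn hn'.
have hkj : k = j.
  case: e p q hk hj {hs} hn hn' => -[] -[] /= hk hj hn hn';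
    by case: (ltngtP k j) => h; nia.
subst j; suff -> : p = q by [].
by case: p q hk hj {hs} hn hn' => -[] //=; lia.
Qed.

Definition pform (e : bool) (n : nat) : Prop :=
  if e then exists2 t, 2 <= t & n = P1 t \/ n = P4 t
  else exists2 t, 2 <= t & n = P2 t \/ n = P3 t.

Lemma P1E t : P1 t * 2 = 3 * t ^ 2 + t + 4.
Proof.
rewrite /P1 (_ : 3 * t ^ 2 + t + 4 = t * (3 * t + 1) + 4); last nia.
by rewrite divnK // dvdn2 !oddD !oddM !oddD /=; case: (odd t).
Qed.

Lemma P2E t : P2 t * 2 = (t + 1) * (3 * t + 2).
Proof.
rewrite /P2 (_ : 3 * (t + 1) ^ 2 - t - 1 = (t + 1) * (3 * t + 2)); last nia.
by rewrite divnK // dvdn2 !oddM !oddD /=; case: (odd t).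
Qed.

Lemma P3E t : P3 t * 2 = (t + 1) * (3 * t + 2) + 4.
Proof.
rewrite /P3 (_ : 3 * (t + 1) ^ 2 - t + 3 = (t + 1) * (3 * t + 2) + 4); last nia.
by rewrite divnK // dvdn2 !oddD !oddM !oddD /=; case: (odd t).
Qed.

Lemma P4E t : P4 t * 2 = (t + 1) * (3 * t + 4).
Proof.
rewrite /P4 (_ : 3 * (t + 1) ^ 2 + t + 1 = (t + 1) * (3 * t + 4)); last nia.
by rewrite divnK // dvdn2 !oddM !oddD /=; case: (odd t).
Qed.

Lemma pformP e n : pform e n <->
  exists k (p : bool), 3 <= k + (e && p) /\ n * 2 + k = k * (3 * k + 2 * e) + 4 * p.
Proof.
split.
  case: e => -[t ht [] ->].
  - by exists t, true; split; [lia | rewrite P1E; nia].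
  - by exists t.+1, false; split; [lia | rewrite P4E; nia].
  - by exists t.+1, false; split; [lia | rewrite P2E; nia].
  - by exists t.+1, true; split; [lia | rewrite P3E; nia].
case: e => -[k [[] /= [hk hn]]].
- by exists k; [lia | left; have := P1E k; nia].
- by exists k.-1; [lia | right; have := P4E k.-1; nia].
- by exists k.-1; [lia | right; have := P3E k.-1; nia].
- by exists k.-1; [lia | left; have := P2E k.-1; nia].
Qed.

Lemma pform_disjoint n : pform true n -> pform false n -> False.
Proof.
move=> /pformP [k [p [hk hn]]] /pformP [j [q [hj hn']]].
by case: p q hk hj hn hn' => -[] /= hk hj hn hn'; case: (ltngtP k j) => h; nia.
Qed.

Lemma franklin2_fixed_pform n l : tilted n l -> franklin2 l = l ->
  pform (odd (nth 0 l 1)) n.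
Proof.
move=> hL hG; have [k [e [p [hk el]]]] := franklin2_fixedE hL hG.
apply/pformP; exists k, p; subst l; rewrite odd_franklin2_fixpoint; last lia.
by split=> //; case: hL => _ _ _ <-; exact: sumn_franklin2_fixpoint.
Qed.

Lemma pform_franklin2_fixed e n : pform e n ->
  exists l, [/\ tilted n l, franklin2 l = l & odd (nth 0 l 1) = e].
Proof.
move=> /pformP [k [p [hk hn]]]; have [hL hG] := franklin2_fixpoint_fixed hk.
exists (franklin2_fixpoint k e p); rewrite odd_franklin2_fixpoint; last lia.
suff -> : n = sumn (franklin2_fixpoint k e p) by [].
by have := sumn_franklin2_fixpoint k e p; lia.
Qed.

Lemma franklin2_fixed_uniq n l l' : tilted n l -> franklin2 l = l ->
  tilted n l' -> franklin2 l' = l' -> odd (nth 0 l 1) = odd (nth 0 l' 1) -> l = l'.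
Proof.
move=> hL hG hL' hG'.
have [k [e [p [hk el]]]] := franklin2_fixedE hL hG.
have [j [e' [q [hj el']]]] := franklin2_fixedE hL' hG'.
subst l l'; rewrite !odd_franklin2_fixpoint; try lia.
move=> ee'; subst e'; apply: franklin2_fixpoint_inj => //.
by case: hL => _ _ _ ->; case: hL' => _ _ _ ->.
Qed.

Definition tilt (s : seq nat) : seq nat :=
  if s is a :: b :: c :: d then a.+1 :: b :: c.-1 :: d else s.

Definition untilt (l : seq nat) : seq nat :=
  if l is _ :: b :: _ :: d then b :: b :: b :: d else l.

Lemma sorted_geq_last s i : sorted geq s -> i < size s -> last 0 s <= nth 0 s i.
Proof.
move=> hs hi; rewrite -nth_last.
have geq_trans : transitive geq by move=> x y z h1 h2; exact: leq_trans h2 h1.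
by apply: (sorted_leq_nth geq_trans leqnn 0 hs); rewrite ?inE; lia.
Qed.

Lemma tilt_tilted n b s : is_partition n s -> good_part b s ->
  [/\ tilted n (tilt s), odd (nth 0 (tilt s) 1) = b & untilt (tilt s) = s].
Proof.
case/and3P=> hso hpos /eqP hsum.
case/and5P=> hsz /eqP e01 /eqP e12 h3 /and4P[/eqP hodd huq hd4 hl1].
have [a [d es]] : exists a d, s = [:: a, a, a & d].
  case: s hsz e01 e12 {hso hpos hsum h3 hodd huq hd4 hl1} => [|x [|y [|z d]]] //= _ e1 e2.
  by exists x, d; rewrite e1 e2.
subst s; rewrite /= ?drop0 in hsum h3 hodd huq hd4 hl1.
have hall2 i : i < (size d).+3 -> 2 <= nth 0 [:: a, a, a & d] i.
  move=> hi; have hl := sorted_geq_last hso hi.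
  have hlp : 0 < last 0 [:: a, a, a & d].
    by rewrite -nth_last; move/all_nthP: hpos => /(_ 0); apply.
  by apply: (leq_trans _ hl); move: hl1 hlp => /=; lia.
have hsd j : j.+1 < size d -> nth 0 d j.+1 <= nth 0 d j.
  by move=> hj; move/sortedP: hso => /(_ 0 j.+3) /=; apply; lia.
have hud j : j.+1 < size d -> nth 0 d j.+1 != nth 0 d j.
  by move=> hj; rewrite nth_uniq //; [rewrite (gtn_eqF (ltnSn j)) | exact: ltnW].
split=> //; split.
- move=> [|[|[|j]]] /= hj; try lia.
  by have := hsd j ltac:(lia); have := hud j ltac:(lia); lia.
- by move=> [|[|[|j]]] /= hj; try lia; exact: (hall2 j.+3).
- by apply/slopeP; split=> /=; [lia | move=> [|[|j]] //= hj; lia].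
- by rewrite /=; lia.
Qed.

Lemma untilt_good n l : tilted n l ->
  [/\ is_partition n (untilt l), good_part (odd (nth 0 l 1)) (untilt l)
    & tilt (untilt l) = l].
Proof.
case=> hd ha hr hsum.
have [a [b [c [d el]]]] : exists a b c d, l = [:: a, b, c & d].
  have := slope_le_size l.
  case: l hr {hd ha hsum} => [|x [|y [|z d]]] /=; try lia.
  by exists x, y, z, d.
subst l.
have hab : a = b.+1 by apply: (slope_nth (l := [:: a, b, c & d]) (j := 0)); lia.
have hbc : b = c.+1 by apply: (slope_nth (l := [:: a, b, c & d]) (j := 1)); lia.
have hc2 : 2 <= c by apply: (ha 2).
subst a b.
have hdd j : j.+1 < size d -> nth 0 d j.+1 < nth 0 d j by move=> hj; apply: (hd j.+3).
have hd0 : 0 < size d -> nth 0 d 0 < c by move=> h; apply: (hd 2) => /=; lia.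
have had j : j < size d -> 2 <= nth 0 d j by move=> hj; apply: (ha j.+3).
split=> //=.
- apply/and3P; split.
  + apply/(sortedP 0) => -[|[|[|j]]] /= hj //.
      by have := hd0 ltac:(lia); rewrite /geq; lia.
    by have := hdd j ltac:(lia); rewrite /geq; lia.
  + apply/(all_nthP 0) => -[|[|[|j]]] /= hj; rewrite ?ltnS //; try lia.
    by have := had j ltac:(lia); lia.
  + by apply/eqP; rewrite -hsum /=; lia.
- apply/and5P; split=> //=; try lia.
  apply/and4P; split=> //; rewrite ?drop0.
  + have : sorted (fun x y => y < x) d by apply/(sortedP 0) => j hj; exact: hdd.
    apply: sorted_uniq; last by move=> x; rewrite ltnn.
    by move=> x y z h1 h2; exact: ltn_trans h2 h1.
  + by apply/implyP => h; have := hd0 ltac:(lia); lia.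
  + case: d hdd hd0 had {hd ha hsum hr} => [|x d] _ _ had /=; first lia.
    have := had (size d) (ltnSn _).
    rewrite (_ : nth 0 (x :: d) (size d) = last 0 (x :: d)); last by rewrite -nth_last.
    by move=> /= h; apply/eqP; lia.
Qed.

Definition tuple_of_parts (n : nat) (s : seq nat) : n.-tuple 'I_n.+1 :=
  [tuple inord (nth 0 s i) | i < n].

Lemma partition_bounds n s : is_partition n s ->
  size s <= n /\ (forall i, nth 0 s i <= n).
Proof.
case/and3P=> _ hpos /eqP <-; split.
  by elim: s hpos => //= x s IH /andP[h1 h2]; have := IH h2; lia.
elim: s hpos => [|x s IH] /= hpos i; first by rewrite nth_nil.
by case/andP: hpos => h1 h2; case: i => [|i] /=; [lia | have := IH h2 i; lia].
Qed.

Lemma mkseq_nth_pad (s : seq nat) m : size s <= m ->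
  mkseq (nth 0 s) m = s ++ nseq (m - size s) 0.
Proof.
move=> hs; apply: (eq_from_nth (x0 := 0)); rewrite size_mkseq ?size_cat ?size_nseq; first lia.
move=> i hi; rewrite nth_mkseq // nth_cat nth_nseq.
by case: ifP => // h; rewrite nth_default; [case: ifP | lia].
Qed.

Lemma val_tuple_of_parts n s : (forall i, nth 0 s i <= n) ->
  map val (tuple_of_parts n s) = mkseq (nth 0 s) n.
Proof.
move=> hb; apply: (eq_from_nth (x0 := 0)); rewrite size_map size_tuple ?size_mkseq // => i hi.
rewrite nth_mkseq // (nth_map ord0) ?size_tuple //.
have -> : nth ord0 (tuple_of_parts n s) i = tnth (tuple_of_parts n s) (Ordinal hi).
  by rewrite (tnth_nth ord0).
by rewrite tnth_mktuple /= inordK // ltnS.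
Qed.

Lemma path_geq_nseq0 y m : path geq y (nseq m 0).
Proof. by elim: m y => //= m IH y; rewrite IH andbT. Qed.

Lemma sorted_geq_split0 (s : seq nat) : sorted geq s ->
  s = [seq x <- s | 0 < x] ++ nseq (size s - size [seq x <- s | 0 < x]) 0.
Proof.
elim: s => //= a s IH hs; have hs' := path_sorted hs.
case: (posnP a) => [ha|ha]; last by rewrite /= subSS -(IH hs').
subst a.
have /all_pred1P es : all (pred1 0) s.
  apply: sub_all (order_path_min (fun y z w h1 h2 => leq_trans h2 h1) hs).
  by move=> y /=; rewrite leqn0.
have -> : [seq x <- s | 0 < x] = [::] by rewrite {1}es filter_nseq.
by rewrite subn0 /= -es.
Qed.

Lemma tuple_of_partsK n s : is_partition n s ->
  parts_of (tuple_of_parts n s) = s /\ sorted geq (map val (tuple_of_parts n s)).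
Proof.
move=> hp; have [hsz hb] := partition_bounds hp.
case/and3P: hp => hso hpos _.
rewrite /parts_of val_tuple_of_parts // mkseq_nth_pad //; split.
  by rewrite filter_cat filter_nseq /= cats0; exact/all_filterP.
case: s hso {hpos hsz hb} => [|x s] /= hso; last by rewrite cat_path hso path_geq_nseq0.
by case: (n - 0) => //= m; exact: path_geq_nseq0.
Qed.

Lemma parts_ofK n (t : n.-tuple 'I_n.+1) : sorted geq (map val t) ->
  tuple_of_parts n (parts_of t) = t.
Proof.
move=> hs.
have hb i : nth 0 (parts_of t) i <= n.
  case: (ltnP i (size (parts_of t))) => hi; last by rewrite nth_default.
  have /mapP [z _ ->] : nth 0 (parts_of t) i \in map val t.
    by have := mem_nth 0 hi; rewrite mem_filter => /andP [].
  exact: (ltn_ord z).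
have hsz : size (parts_of t) <= n.
  by rewrite -[X in _ <= X](size_tuple t) -(size_map val) size_filter count_size.
apply: val_inj; apply: (inj_map val_inj).
rewrite val_tuple_of_parts // mkseq_nth_pad // [RHS](sorted_geq_split0 hs).
by rewrite size_map size_tuple.
Qed.

Lemma card_involution_swap (T : finType) (f : T -> T) (A B : {set T}) :
  involutive f -> {in A, forall x, f x \in B} -> {in B, forall x, f x \in A} ->
  #|A| = #|B|.
Proof.
move=> finv fAB fBA; have finj := inv_inj finv.
have card_le (X Y : {set T}) : {in X, forall x, f x \in Y} -> #|X| <= #|Y|.
  move=> fXY; rewrite -(card_imset X finj).
  by apply/subset_leq_card/subsetP => _ /imsetP[x hx ->]; exact: fXY.
by apply/eqP; rewrite eqn_leq !card_le.
Qed.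

Definition good_tuples (n : nat) (b : bool) : {set n.-tuple 'I_n.+1} :=
  [set t : n.-tuple 'I_n.+1 | sorted geq (map val t) && is_partition n (parts_of t)
           && good_part b (parts_of t)].

Definition tilt_of (n : nat) (t : n.-tuple 'I_n.+1) : seq nat := tilt (parts_of t).

Definition fixed_tuples (n : nat) : {set n.-tuple 'I_n.+1} :=
  [set t : n.-tuple 'I_n.+1 | franklin2 (tilt_of t) == tilt_of t].

Definition franklin_tuple (n : nat) (t : n.-tuple 'I_n.+1) : n.-tuple 'I_n.+1 :=
  if (t \in good_tuples n false) || (t \in good_tuples n true)
  then tuple_of_parts n (untilt (franklin2 (tilt_of t))) else t.

Lemma good_tuple_tilted n b (t : n.-tuple 'I_n.+1) : t \in good_tuples n b ->
  [/\ tilted n (tilt_of t), odd (nth 0 (tilt_of t) 1) = b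
    & t = tuple_of_parts n (untilt (tilt_of t))].
Proof.
rewrite inE => /andP [/andP [hs hp] hg].
have [h1 h2 h3] := tilt_tilted hp hg.
by split=> //; rewrite /tilt_of h3 parts_ofK.
Qed.

Lemma tilted_good_tuple n l : tilted n l ->
  tuple_of_parts n (untilt l) \in good_tuples n (odd (nth 0 l 1)) /\
  tilt_of (tuple_of_parts n (untilt l)) = l.
Proof.
move=> hL; have [hp hg he] := untilt_good hL.
have [hpe hse] := tuple_of_partsK hp.
by split; [rewrite inE hse hpe hp hg | rewrite /tilt_of hpe he].
Qed.

Lemma franklin_tuple_good n b (t : n.-tuple 'I_n.+1) : t \in good_tuples n b ->
  [/\ franklin_tuple t \in good_tuples n (odd (nth 0 (franklin2 (tilt_of t)) 1)),
      tilt_of (franklin_tuple t) = franklin2 (tilt_of t)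
    & franklin_tuple (franklin_tuple t) = t].
Proof.
move=> ht; have [hL hb et] := good_tuple_tilted ht.
have [hGL hGG _] := franklin2_involution hL.
have [ht' hl'] := tilted_good_tuple hGL.
have good u b' : u \in good_tuples n b' ->
    (u \in good_tuples n false) || (u \in good_tuples n true).
  by case: b' => ->; rewrite ?orbT.
have -> : franklin_tuple t = tuple_of_parts n (untilt (franklin2 (tilt_of t))).
  by rewrite /franklin_tuple (good _ _ ht).
by split=> //; rewrite /franklin_tuple (good _ _ ht') hl' hGG -et.
Qed.

Lemma franklin_tuple_involutive n : involutive (@franklin_tuple n).
Proof.
move=> t; case E: ((t \in good_tuples n false) || (t \in good_tuples n true)).
  by case/orP: E => /franklin_tuple_good [].
by rewrite /franklin_tuple E E.
Qed.

Lemma franklin_tuple_moved n b (t : n.-tuple 'I_n.+1) :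
  t \in good_tuples n b :\: fixed_tuples n ->
  franklin_tuple t \in good_tuples n (~~ b) :\: fixed_tuples n.
Proof.
rewrite in_setD inE => /andP [hnf ht].
have [ht' hl _] := franklin_tuple_good ht; have [hL hb _] := good_tuple_tilted ht.
have [_ hGG [e | hpar]] := franklin2_involution hL; first by rewrite e eqxx in hnf.
by rewrite in_setD -hb -hpar ht' andbT inE hl hGG eq_sym.
Qed.

Lemma card_good_moved n :
  #|good_tuples n false :\: fixed_tuples n| = #|good_tuples n true :\: fixed_tuples n|.
Proof.
by apply: (card_involution_swap (@franklin_tuple_involutive n)) => t;
  move/franklin_tuple_moved.
Qed.

Lemma good_fixed_tilted n b (t : n.-tuple 'I_n.+1) :
  t \in good_tuples n b :&: fixed_tuples n ->
  [/\ tilted n (tilt_of t), franklin2 (tilt_of t) = tilt_of t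
    & odd (nth 0 (tilt_of t) 1) = b].
Proof.
rewrite in_setI => /andP [ht]; rewrite inE => /eqP hf.
by have [hL hb _] := good_tuple_tilted ht.
Qed.

Lemma card_good_fixed0 n b : ~ pform b n -> #|good_tuples n b :&: fixed_tuples n| = 0.
Proof.
move=> hP; apply: eq_card0 => t; apply/negbTE/negP => /good_fixed_tilted [hL hG hb].
by apply: hP; rewrite -hb; exact: franklin2_fixed_pform hL hG.
Qed.

Lemma card_good_fixed1 n b : pform b n -> #|good_tuples n b :&: fixed_tuples n| = 1.
Proof.
move=> /pform_franklin2_fixed [l [hL hG hb]].
apply/eqP/cards1P; exists (tuple_of_parts n (untilt l)); apply/setP => t.
rewrite in_set1; apply/idP/eqP => [ht | ->].
  have [hLt hGt hbt] := good_fixed_tilted ht.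
  have <- : tilt_of t = l by apply: franklin2_fixed_uniq hLt hGt hL hG _; rewrite hbt hb.
  by have [_ _] := good_tuple_tilted (b := b) (t := t) (setIP ht).1.
have [ht hl] := tilted_good_tuple hL.
by rewrite in_setI -hb ht inE hl hG eqxx.
Qed.

Theorem corollary4p8 (n : nat) (hn : 6 <= n) :
  [/\ (forall t, 2 <= t -> [/\ n <> P1 t, n <> P2 t, n <> P3 t & n <> P4 t]) ->
        e_count n = o_count n,
      (exists2 t, 2 <= t & n = P1 t \/ n = P4 t) ->
        e_count n + 1 = o_count n
    & (exists2 t, 2 <= t & n = P2 t \/ n = P3 t) ->
        e_count n = o_count n + 1].
Proof.
have count_split b : count_parts b n =
    #|good_tuples n b :&: fixed_tuples n| + #|good_tuples n b :\: fixed_tuples n|.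
  by rewrite cardsID.
rewrite /e_count /o_count !count_split card_good_moved.
split=> [noP | hP | hP].
- have nP b : ~ pform b n by case: b => -[t /noP[? ? ? ?] []].
  by rewrite !card_good_fixed0.
- have no_even := @card_good_fixed0 n false (@pform_disjoint n hP).
  by rewrite no_even (card_good_fixed1 (b := true) hP); lia.
- have no_odd := @card_good_fixed0 n true (fun hT => @pform_disjoint n hT hP).
  by rewrite no_odd (card_good_fixed1 (b := false) hP); lia.
Qed.
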